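(* Let $n\ge1$, $p<0$, let $\mathcal{S}$ be a discrete subgroup of $O(n+1)$ satisfying the spanning property, and let $f$ be a positive $\mathcal{S}$-invariant function on $\mathbb{S}^n$ with $c_1\le f\le c_2$. There is a constant $C_n(\mathcal{S})>0$ depending only on $n$ and $\mathcal{S}$ such that for every $\Omega\in\mathcal{K}_p(\mathcal{S})$, $$h_\Omega(x)\le C_n(\mathcal{S})\qquad\forall x\in\mathbb{S}^n.$$
   Context: $\mathcal{K}_p(\mathcal{S})=\{\Omega\in\mathcal{K}_0(\mathcal{S}):\int_{\mathbb{S}^n}fh_\Omega^p=\int_{\mathbb{S}^n}f\}$, where $\mathcal{K}_0(\mathcal{S})$ is the set of convex bodies in $\mathbb{R}^{n+1}$ containing the origin and invariant under all $\phi\in\mathcal{S}$, and $h_\Omega$ is the support function. Spanning property: for every $a\in\mathbb{S}^n$, $\mathrm{conv}\{\phi(a):\phi\in\mathcal{S}\}$ is a non-degenerate $(n+1)$-dimensional polytope. *)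

From HB Require Import structures.
From mathcomp Require Import all_boot all_order all_algebra.
From mathcomp Require Import all_classical all_reals all_analysis.
Set Implicit Arguments. Unset Strict Implicit. Unset Printing Implicit Defensive.
Import Order.TTheory GRing.Theory Num.Theory.
Import numFieldNormedType.Exports.
Local Open Scope classical_set_scope.
Local Open Scope ring_scope.

Section Defs.
Context {R : realType}.

Definition dotv k (x y : 'rV[R]_k) : R := \sum_(i < k) x 0 i * y 0 i.
Definition normv k (x : 'rV[R]_k) : R := Num.sqrt (dotv x x).
Definition sphere k : set 'rV[R]_k := [set x | dotv x x = 1].

(* action of a matrix on R^k (row-vector convention) *)
Definition act k (A : 'M[R]_k) (x : 'rV[R]_k) : 'rV[R]_k := x *m A.

Definition orthogonal_mx k (A : 'M[R]_k) : Prop := A *m A^T = 1%:M.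

Definition subgroup_O k (S : set 'M[R]_k) : Prop :=
  [/\ S 1%:M,
      (forall A B, S A -> S B -> S (A *m B)),
      (forall A, S A -> S (invmx A)) &
      (forall A, S A -> orthogonal_mx A)].

Definition discrete_set k (S : set 'M[R]_k) : Prop :=
  forall A, S A -> exists U, nbhs A U /\ U `&` S `<=` [set A].

Definition conv_hull k (A : set 'rV[R]_k) : set 'rV[R]_k :=
  [set x | exists m (pts : 'I_m -> 'rV[R]_k) (w : 'I_m -> R),
     [/\ (forall i, A (pts i)), (forall i, 0 <= w i), \sum_(i < m) w i = 1 &
         x = \sum_(i < m) w i *: pts i]].

Definition polytope k (P : set 'rV[R]_k) : Prop :=
  exists m (pts : 'I_m -> 'rV[R]_k), P = conv_hull (range pts).

Definition nondeg_polytope k (P : set 'rV[R]_k) : Prop :=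
  polytope P /\ (interior P !=set0).

Definition spanning_property k (S : set 'M[R]_k) : Prop :=
  forall a, @sphere k a -> nondeg_polytope (conv_hull [set act phi a | phi in S]).

Definition convex_set k (K : set 'rV[R]_k) : Prop :=
  forall x y (t : R), K x -> K y -> 0 <= t <= 1 -> K (t *: x + (1 - t) *: y).

Definition convex_body k (K : set 'rV[R]_k) : Prop :=
  [/\ compact K, convex_set K & interior K !=set0].

Definition K0 k (S : set 'M[R]_k) (K : set 'rV[R]_k) : Prop :=
  [/\ convex_body K, K 0 & forall phi, S phi -> [set act phi x | x in K] = K].

Definition support_fun k (K : set 'rV[R]_k) (x : 'rV[R]_k) : R :=
  sup [set dotv x y | y in K].

(* t^p for p < 0 on [0, +oo), with 0^p = +oo *)
Definition powE (t p : R) : \bar R :=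
  if t == 0 then +oo%E else (t `^ p)%:E.

Definition consv k (t : R) (y : 'rV[R]_k) : 'rV[R]_k.+1 :=
  \row_(i < k.+1) match unlift ord0 i with Some j => y 0 j | None => t end.

(* iterated Lebesgue integral over R^k (equal to the Lebesgue integral on
   R^k for nonnegative Borel functions, by Tonelli) *)
Fixpoint iint (k : nat) : ('rV[R]_k -> \bar R) -> \bar R :=
  match k return ('rV[R]_k -> \bar R) -> \bar R with
  | 0 => fun g => g 0
  | k'.+1 => fun g =>
      (\int[@lebesgue_measure R]_(t in setT) iint (fun y => g (consv t y)))%E
  end.

(* integral over the unit sphere S^{k-1} w.r.t. surface measure, via the
   cone-volume formula  sigma(A) = k * vol({t a : a in A, 0 < t <= 1}) *)
Definition sphere_int k (F : 'rV[R]_k -> \bar R) : \bar R :=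
  ((k%:R)%:E * iint (fun x => if ((0 < normv x) && (normv x <= 1))%R
                               then F ((normv x)^-1 *: x) else 0%E))%E.

(* Borel measurability of a function on the sphere: its radial extension to
   R^k \ {0} is Borel *)
Definition sphere_borel k (F : 'rV[R]_k -> R) : Prop :=
  forall B : set R, measurable B ->
    <<s [set U : set 'rV[R]_k | open U] >>
      [set x | x != 0 /\ B (F ((normv x)^-1 *: x))].

Definition Kp k (S : set 'M[R]_k) (p : R) (f : 'rV[R]_k -> R)
    (K : set 'rV[R]_k) : Prop :=
  K0 S K /\
  sphere_int (fun x => ((f x)%:E * powE (support_fun K x) p)%E) =
  sphere_int (fun x => (f x)%:E).

End Defs.
Arguments sphere {R} k.

From Pilot Require Import Defs.
From HB Require Import structures.
From mathcomp Require Import all_boot all_order all_algebra.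
From mathcomp Require Import all_classical all_reals all_analysis.
From mathcomp Require Import measurable_realfun ring lra.
Set Implicit Arguments. Unset Strict Implicit. Unset Printing Implicit Defensive.
Import Order.TTheory GRing.Theory Num.Theory.
Import numFieldNormedType.Exports.
Local Open Scope classical_set_scope.
Local Open Scope ring_scope.

(* By the spanning property the orbit polytope P of a unit vector a has
   nonempty interior, and S fixes no unit vector.  The centres of the Euclidean
   e-balls contained in P form a nonempty compact convex S-invariant set; its
   point of least norm is unique, hence fixed by S, hence 0.  So for every unit
   z some phi in S has <z, phi a> > 0, and compactness of S^n x S^n makes this
   uniform: <z, phi a> >= c > 0.  If h_K(x) > 2/c then some y in K has
   |y| > 2/c, and as K is S-invariant, h_K >= |y| c > 2 on the whole sphere; then
   h_K^p <= 2^p < 1 there and the integral of f h_K^p is smaller than that of f,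
   contradicting K in K_p(S).  Hence C = 2/c works. *)

Local Notation orbit S a := [set act phi a | phi in S].

Section Euclidean.
Context {R : realType} {k : nat}.
Implicit Types (x y z : 'rV[R]_k) (A : 'M[R]_k).

Lemma dotvC x y : dotv x y = dotv y x.
Proof. by apply: eq_bigr => i _; rewrite mulrC. Qed.

Lemma dotvDl x y z : dotv (x + y) z = dotv x z + dotv y z.
Proof. by rewrite /dotv -big_split; apply: eq_bigr => i _; rewrite mxE mulrDl. Qed.

Lemma dotvDr x y z : dotv z (x + y) = dotv z x + dotv z y.
Proof. by rewrite dotvC dotvDl !(dotvC z). Qed.

Lemma dotvZl c x y : dotv (c *: x) y = c * dotv x y.
Proof. by rewrite /dotv mulr_sumr; apply: eq_bigr => i _; rewrite mxE mulrA. Qed.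

Lemma dotvZr c x y : dotv x (c *: y) = c * dotv x y.
Proof. by rewrite dotvC dotvZl dotvC. Qed.

Lemma dotvNl x y : dotv (- x) y = - dotv x y.
Proof. by rewrite -scaleN1r dotvZl mulN1r. Qed.

Lemma dotvNr x y : dotv x (- y) = - dotv x y.
Proof. by rewrite dotvC dotvNl dotvC. Qed.

Lemma dotv0l y : dotv 0 y = 0.
Proof. by rewrite -(scale0r 0) dotvZl mul0r. Qed.

Lemma dotv_sumr m z (F : 'I_m -> 'rV[R]_k) :
  dotv z (\sum_(i < m) F i) = \sum_(i < m) dotv z (F i).
Proof. by elim/big_rec2: _ => [|i u v _ <-]; rewrite ?dotvDr // dotvC dotv0l. Qed.

Lemma dotvv_ge0 x : 0 <= dotv x x.
Proof. by apply: sumr_ge0 => i _; rewrite -expr2 sqr_ge0. Qed.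

Lemma sqr_coord_le_dotv x i : x 0 i ^+ 2 <= dotv x x.
Proof.
rewrite /dotv (bigD1 i) //= -expr2 lerDl; apply: sumr_ge0 => j _.
by rewrite -expr2 sqr_ge0.
Qed.

Lemma dotvv_eq0 x : dotv x x = 0 -> x = 0.
Proof.
move=> x0; apply/rowP => i; rewrite mxE; apply/eqP.
by rewrite -sqrf_eq0 eq_le sqr_ge0 andbT -x0 sqr_coord_le_dotv.
Qed.

Lemma dotvv_gt0 x : x != 0 -> 0 < dotv x x.
Proof. by move=> x0; rewrite lt_def dotvv_ge0 andbT; apply: contra x0 => /eqP/dotvv_eq0->. Qed.

Lemma coord_le1 x i : dotv x x <= 1 -> `|x 0 i| <= 1.
Proof.
move=> x1; rewrite -(@ler_pXn2r _ 2) ?nnegrE // expr1n real_normK ?num_real //.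
exact: le_trans (sqr_coord_le_dotv x i) x1.
Qed.

Lemma dotv_AMGM x y : 2 * dotv x y <= dotv x x + dotv y y.
Proof.
have := dotvv_ge0 (x - y).
rewrite dotvDl !dotvDr !dotvNl !dotvNr opprK (dotvC y x); lra.
Qed.

Lemma dotv_sphere_le1 x y : sphere k x -> sphere k y -> dotv x y <= 1.
Proof. by move=> sx sy; have := dotv_AMGM x y; rewrite sx sy; lra. Qed.

Lemma normv_gt0 x : (0 < normv x) = (x != 0).
Proof.
rewrite /normv sqrtr_gt0; apply/idP/idP => [|/dotvv_gt0 //].
by apply: contraTneq => ->; rewrite dotv0l ltxx.
Qed.

Lemma normv_le1 x : (normv x <= 1) = (dotv x x <= 1).
Proof. by rewrite /normv -{1}sqrtr1 ler_sqrt. Qed.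

Lemma sphere_normalize x : x != 0 -> sphere k ((normv x)^-1 *: x).
Proof.
move=> x0; rewrite /sphere /= /normv dotvZl dotvZr mulrA -expr2 exprVn.
by rewrite sqr_sqrtr ?dotvv_ge0 // mulVf // gt_eqF // dotvv_gt0.
Qed.

Lemma normvZV x : x != 0 -> normv x *: ((normv x)^-1 *: x) = x.
Proof. by rewrite -normv_gt0 => nx; rewrite scalerA mulfV ?gt_eqF ?scale1r. Qed.

Lemma actB A x y : act A (x - y) = act A x - act A y.
Proof. exact: mulmxBl. Qed.

Lemma actZ A c x : act A (c *: x) = c *: act A x.
Proof. by rewrite /act scalemxAl. Qed.

Lemma orthogonal_dotv A x y : orthogonal_mx A -> dotv (act A x) (act A y) = dotv x y.
Proof.
have dotv_mx u v : dotv u v = (u *m v^T) 0 0.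
  by rewrite /dotv mxE; apply: eq_bigr => i _; rewrite mxE.
by move=> oA; rewrite !dotv_mx /act trmx_mul mulmxA -(mulmxA x) oA mulmx1.
Qed.

Lemma orthogonal_sphere A x : orthogonal_mx A -> sphere k x -> sphere k (act A x).
Proof. by move=> oA; rewrite /sphere /= orthogonal_dotv. Qed.

End Euclidean.

Section ConvexHull.
Context {R : realType} {k : nat}.
Implicit Types (A : set 'rV[R]_k) (x y : 'rV[R]_k).

Lemma conv_hull_convex A : Defs.convex_set (conv_hull A).
Proof.
move=> _ _ t [m1 [p1 [w1 [A1 w10 w11 ->]]]] [m2 [p2 [w2 [A2 w20 w21 ->]]]].
move=> /andP[t0 t1].
pose join T (f1 : 'I_m1 -> T) (f2 : 'I_m2 -> T) (i : 'I_(m1 + m2)) :=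
  match fintype.split i with inl j => f1 j | inr j => f2 j end.
have joinl T f1 f2 j : join T f1 f2 (lshift m2 j) = f1 j by rewrite /join (unsplitK (inl j)).
have joinr T f1 f2 j : join T f1 f2 (rshift m1 j) = f2 j by rewrite /join (unsplitK (inr j)).
exists (m1 + m2)%N, (join _ p1 p2), (join _ (fun j => t * w1 j) (fun j => (1 - t) * w2 j)).
split.
- by move=> i; rewrite /join; case: (fintype.split i).
- by move=> i; rewrite /join; case: (fintype.split i) => j; apply: mulr_ge0 => //; lra.
- rewrite big_split_ord /=.
  under eq_bigr do rewrite joinl.
  under [X in _ + X]eq_bigr do rewrite joinr.
  by rewrite -!mulr_sumr w11 w21 !mulr1 subrKC.
- rewrite big_split_ord /=.
  under [X in _ = X + _]eq_bigr do rewrite !joinl -scalerA.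
  under [X in _ = _ + X]eq_bigr do rewrite !joinr -scalerA.
  by rewrite -!scaler_sumr.
Qed.

Lemma conv_hull_coord_le1 A x i : A `<=` sphere k -> conv_hull A x -> `|x 0 i| <= 1.
Proof.
move=> Asph [m [p [w [Ap w0 w1 ->]]]].
rewrite summxE -w1; apply: le_trans (ler_norm_sum _ _ _) _.
apply: ler_sum => j _; rewrite mxE normrM ger0_norm // ler_piMr //.
by apply: coord_le1; rewrite (Asph _ (Ap j)).
Qed.

Lemma conv_hull_sub1 A x y : A `<=` [set y] -> conv_hull A x -> x = y.
Proof.
move=> Ay [m [p [w [Ap _ w1 ->]]]].
rewrite (eq_bigr (fun i => w i *: y)) => [|i _]; last by rewrite (Ay _ (Ap i)).
by rewrite -scaler_suml w1 scale1r.
Qed.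

Lemma conv_hull_orbit_act (S : set 'M[R]_k) a phi x :
  subgroup_O S -> S phi -> conv_hull (orbit S a) x -> conv_hull (orbit S a) (act phi x).
Proof.
move=> [_ SM _ _] Sphi [m [p [w [Ap w0 w1 ->]]]].
exists m, (fun i => act phi (p i)), w; split => //.
- move=> i; have [psi Spsi <-] := Ap i; exists (psi *m phi); first exact: SM.
  by rewrite /act mulmxA.
- by rewrite /act mulmx_suml; apply: eq_bigr => i _; rewrite scalemxAl.
Qed.

End ConvexHull.

Section Continuity.
Context {R : realType} {T : topologicalType}.

Lemma sum_continuous m (F : 'I_m -> T -> R) :
  (forall i, continuous (F i)) -> continuous (fun t => \sum_(i < m) F i t).
Proof. by move=> Fc; apply: continuous_big => [|i _]; [exact: add_continuous | exact: Fc]. Qed.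

Lemma dotv_continuous k (f g : T -> 'rV[R]_k) :
  (forall i, continuous (fun t => f t 0 i)) -> (forall i, continuous (fun t => g t 0 i)) ->
  continuous (fun t => dotv (f t) (g t)).
Proof.
by move=> fc gc; apply: sum_continuous => i t; exact: (continuousM (fc i t) (gc i t)).
Qed.

Lemma act_coord_continuous k (A : 'M[R]_k) (g : T -> 'rV[R]_k) :
  (forall i, continuous (fun t => g t 0 i)) ->
  forall i, continuous (fun t => act A (g t) 0 i).
Proof.
move=> gc i; under eq_fun do rewrite mxE.
apply: sum_continuous => j t.
exact: (continuousM (gc j t) (@cst_continuous T R (A j i) t)).
Qed.

End Continuity.

Section Topology.
Context {R : realType} {k : nat}.

Lemma dotvv_continuous : continuous (fun x : 'rV[R]_k => dotv x x).
Proof. by apply: dotv_continuous => i; exact: coord_continuous. Qed.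

Lemma sphere_closed : closed (sphere k : set 'rV[R]_k).
Proof.
by apply: (@preimage_closed _ _ (fun x => dotv x x) [set 1]) => [x _|];
  [exact: dotvv_continuous | exact: closed_eq].
Qed.

Lemma bounded_set_coord (A : set 'rV[R]_k) (M : R) : 0 <= M ->
  (forall x, A x -> forall i, `|x 0 i| <= M) -> bounded_set A.
Proof.
move=> M0 AM; exists M; split; first exact: num_real.
move=> N MN x Ax; rewrite /= -[`|x|]/(mx_norm x) mx_normrE; apply: bigmax_le => [|[i j] _ /=].
  exact: le_trans (ltW MN).
by rewrite (ord1 i); apply: le_trans (AM _ Ax j) (ltW MN).
Qed.

Lemma sphere_compact : compact (sphere k : set 'rV[R]_k).
Proof.
apply: bounded_closed_compact; last exact: sphere_closed.
by apply: (@bounded_set_coord _ 1) => // x sx i; apply: coord_le1; rewrite sx.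
Qed.

Lemma interior_set1_rV (b : 'rV[R]_k.+1) : interior [set b] = set0.
Proof.
apply/seteqP; split => // q /nbhs_ballP[e /= e0 qb].
have /qb qE : ball q e q by exact: ballxx.
pose u := q + (e / 2) *: delta_mx 0 ord0.
have /qb : ball q e u.
  split=> // i j; rewrite (ord1 i) /ball /= !mxE opprD addrA subrr add0r normrN normrM.
  rewrite gtr0_norm ?divr_gt0 //; case: (_ && _); rewrite ?normr1 ?normr0; lra.
rewrite -qE => /(congr1 (fun v : 'rV[R]_k.+1 => v 0 ord0)).
by rewrite !mxE eqxx mulr1; lra.
Qed.

End Topology.

Section InnerParallel.
Context {R : realType} {k : nat}.
Implicit Types (P Q : set 'rV[R]_k) (e : R) (u w : 'rV[R]_k).

(* The inner parallel body of P at distance e, for the Euclidean distance rather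
   than the sup-norm distance of the matrix topology, so that orthogonal maps
   preserve it. *)
Definition inner_parallel P e := [set w | forall u, dotv (u - w) (u - w) < e ^+ 2 -> P u].

Lemma inner_parallel_sub P e : 0 < e -> inner_parallel P e `<=` P.
Proof. by move=> e0 w; apply; rewrite subrr dotv0l exprn_gt0. Qed.

Lemma interior_inner_parallel P w : interior P w -> exists2 e, 0 < e & inner_parallel P e w.
Proof.
move=> /nbhs_ballP[e /= e0 wP]; exists e => // u uw; apply: wP.
split=> // i j; rewrite (ord1 i) /ball /= -normrN opprB.
rewrite -(@ltr_pXn2r _ 2) ?nnegrE ?(ltW e0) // real_normK ?num_real //.
by apply: le_lt_trans uw; have := sqr_coord_le_dotv (u - w) j; rewrite !mxE.
Qed.

Lemma inner_parallel_closed P e : closed (inner_parallel P e).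
Proof.
move=> w wcl u uw.
pose f w' := dotv (u - w') (u - w').
have fc : continuous f.
  have ucont i : continuous (fun w' : 'rV[R]_k => (u - w') 0 i).
    have -> : (fun w' : 'rV[R]_k => (u - w') 0 i) = (fun w' => u 0 i - w' 0 i).
      by apply/funext => w'; rewrite !mxE.
    by move=> w'; apply: continuousB; [exact: cst_continuous | exact: coord_continuous].
  exact: dotv_continuous.
have oB : open (f @^-1` [set x | x < e ^+ 2]).
  exact: open_comp (fun w' _ => fc w') (@open_lt R (e ^+ 2)).
by have [w' [cw' Bw']] := wcl _ (open_nbhs_nbhs (conj oB uw)); exact: cw'.
Qed.

Lemma inner_parallel_convex P e : Defs.convex_set P -> Defs.convex_set (inner_parallel P e).
Proof.
move=> Pconv w1 w2 t c1 c2 t01 u hu.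
set d := u - (t *: w1 + (1 - t) *: w2).
have -> : u = t *: (w1 + d) + (1 - t) *: (w2 + d).
  by apply/rowP => j; rewrite /d !mxE; ring.
apply: Pconv t01; [apply: c1; rewrite (addrC w1) | apply: c2; rewrite (addrC w2)].
all: by rewrite addrK.
Qed.

Lemma inner_parallel_act P e (A : 'M[R]_k) w : orthogonal_mx A ->
  (forall x, P x -> P (act A x)) -> inner_parallel P e w -> inner_parallel P e (act A w).
Proof.
move=> oA PA Pw u hu.
have actK : act A (act A^T u) = u by rewrite /act -mulmxA (mulmx1C oA) mulmx1.
rewrite -actK; apply/PA/Pw.
by rewrite -(orthogonal_dotv _ _ oA) actB actK.
Qed.

Lemma compact_convex_fixed_point (S : set 'M[R]_k) Q :
  (forall A, S A -> orthogonal_mx A) -> Q !=set0 -> compact Q -> Defs.convex_set Q ->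
  (forall A w, S A -> Q w -> Q (act A w)) ->
  exists2 w, Q w & forall A, S A -> act A w = w.
Proof.
move=> Sorth Q0 cQ Qconv QS.
have [w /set_mem Qw wmin] := EVT_min_rV Q0 cQ (continuous_subspaceT dotvv_continuous).
exists w => // A SA; set v := act A w.
have Qm : Q (2^-1 *: w + (1 - 2^-1) *: v) by apply: Qconv => //; [exact: QS | lra].
(* A w is as long as w, so the midpoint would be shorter than w unless A w = w. *)
have := wmin _ (mem_set Qm).
have -> : 1 - 2^-1 = 2^-1 :> R by lra.
have vv : dotv v v = dotv w w by rewrite orthogonal_dotv //; exact: Sorth.
have := dotvv_ge0 (w - v).
rewrite !dotvDl !dotvDr !dotvNl !dotvNr !dotvZl !dotvZr (dotvC v w) vv => wv0 wvmin.
apply/eqP; rewrite eq_sym -subr_eq0; apply/eqP/dotvv_eq0.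
rewrite !dotvDl !dotvDr !dotvNl !dotvNr (dotvC v w) vv; lra.
Qed.

End InnerParallel.

Section Orbits.
Context {R : realType} {k : nat}.
Variable S : set 'M[R]_k.+1.
Hypotheses (hS : subgroup_O S) (hsp : spanning_property S).

Lemma spanning_no_fixed_point b : sphere k.+1 b -> ~ (forall phi, S phi -> act phi b = b).
Proof.
move=> sb bfix; have [_ [q qint]] := hsp sb.
suff : interior [set b] q by rewrite interior_set1_rV.
by apply: interiorS qint => x; apply: conv_hull_sub1 => _ [phi Sphi <-]; rewrite bfix.
Qed.

Lemma orbit_dotv_pos a z : sphere k.+1 a -> sphere k.+1 z ->
  exists2 phi, S phi & 0 < dotv z (act phi a).
Proof.
move=> sa sz; have [_ _ _ Sorth] := hS.
set P := conv_hull (orbit S a).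
have Psph : orbit S a `<=` sphere k.+1.
  by move=> _ [phi Sphi <-]; apply: orthogonal_sphere => //; exact: Sorth.
have [_ [q /interior_inner_parallel[e e0 qe]]] := hsp sa.
have [w cw wfix] : exists2 w, inner_parallel P e w & forall phi, S phi -> act phi w = w.
  apply: compact_convex_fixed_point => //; first by exists q.
  - apply: bounded_closed_compact; last exact: inner_parallel_closed.
    apply: (@bounded_set_coord _ _ _ 1) => // x /(inner_parallel_sub e0).
    by move=> Px i; apply: conv_hull_coord_le1 Px.
  - by apply: inner_parallel_convex; exact: conv_hull_convex.
  - move=> A w SA; apply: inner_parallel_act; first exact: Sorth.
    by move=> x; exact: conv_hull_orbit_act.
have w0 : w = 0.
  apply/eqP/negPn/negP => /sphere_normalize/spanning_no_fixed_point; apply.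
  by move=> phi Sphi; rewrite actZ wfix.
have [m [p [t [Ap t0 _ ez]]]] : P ((e / 2) *: z).
  by apply: cw; rewrite w0 subr0 dotvZl dotvZr sz mulr1; nra.
have : 0 < \sum_(i < m) t i * dotv z (p i).
  by under eq_bigr do rewrite -dotvZr; rewrite -dotv_sumr -ez dotvZr sz mulr1 divr_gt0.
apply: contraPP => zp; apply/negP; rewrite -leNgt; apply: sumr_le0 => i _.
have [phi Sphi pE] := Ap i; rewrite mulr_ge0_le0 // -pE leNgt.
by apply/negP => zpos; apply: zp; exists phi.
Qed.

Lemma orbit_dotv_uniform : exists2 c, 0 < c &
  forall a z, sphere k.+1 a -> sphere k.+1 z -> exists2 phi, S phi & c <= dotv z (act phi a).
Proof.
pose A := (sphere k.+1 : set 'rV[R]_k.+1) `*` (sphere k.+1 : set 'rV[R]_k.+1).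
pose G phi (v : 'rV[R]_k.+1 * 'rV[R]_k.+1) := dotv v.2 (act phi v.1).
have Gcont phi : continuous (G phi).
  have fstc i : continuous (fun v : 'rV[R]_k.+1 * 'rV[R]_k.+1 => v.1 0 i).
    move=> v; apply: (@continuous_comp _ _ _ fst (fun x : 'rV[R]_k.+1 => x 0 i)).
      exact: cvg_fst.
    exact: coord_continuous.
  have sndc i : continuous (fun v : 'rV[R]_k.+1 * 'rV[R]_k.+1 => v.2 0 i).
    move=> v; apply: (@continuous_comp _ _ _ snd (fun x : 'rV[R]_k.+1 => x 0 i)).
      exact: cvg_snd.
    exact: coord_continuous.
  by apply: dotv_continuous => // i; exact: act_coord_continuous.
have cover : \forall c \near 0^'+, A `<=` [set v | exists2 phi, S phi & c < G phi v].
  apply: (compact_near_coveringP A).1; first exact: compact_setX sphere_compact sphere_compact.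
  move=> [a z] [/= sa sz]; have [phi Sphi pos] := orbit_dotv_pos sa sz.
  exists ([set v | G phi (a, z) / 2 < G phi v], [set c | c < G phi (a, z) / 2]) => /=.
    split; last by apply: nbhs_right_lt; apply: divr_gt0.
    by apply: cvgr_gt (Gcont phi (a, z)) _ _; rewrite /G /=; lra.
  by move=> [v c] [/= Gv cG]; exists phi => //; lra.
have [c [c0 cA]] := filter_ex (filterI (nbhs_right_gt 0) cover).
exists c => // a z sa sz; have [phi Sphi cG] := cA (a, z) (conj sa sz).
by exists phi => //; exact: ltW.
Qed.

End Orbits.

Section NonnegIntegral.
Context d (T : measurableType d) (R : realType) (mu : {measure set T -> \bar R}).
Local Open Scope ereal_scope.
Import HBNNSimple.

(* No measurability is needed: the integral of a nonnegative function is the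
   supremum of the integrals of its simple minorants. *)
Lemma ge0_le_integralT (f g : T -> \bar R) : (forall x, 0 <= f x) -> (forall x, f x <= g x) ->
  \int[mu]_x f x <= \int[mu]_x g x.
Proof.
move=> f0 fg; have g0 x : 0 <= g x by exact: le_trans (f0 x) (fg x).
rewrite !ge0_integralTE //; apply: ereal_sup_le => _ [h /= hf <-].
by exists h => //= x; exact: le_trans (hf x) (fg x).
Qed.

Lemma ge0_le_integralTZl (f g : T -> \bar R) (l : R) : (0 < l)%R ->
  (forall x, 0 <= g x) -> (forall x, g x <= l%:E * f x) ->
  \int[mu]_x g x <= l%:E * \int[mu]_x f x.
Proof.
move=> l0 g0 gf; rewrite ge0_integralTE //; apply: ge_ereal_sup => _ [h /= hg <-].
rewrite -integralT_nnsfun.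
have lhK x : (h x)%:E = l%:E * (l^-1 * h x)%:E by rewrite -EFinM mulVKf ?gt_eqF.
under eq_integral do rewrite lhK.
rewrite ge0_integralZl_EFin ?(ltW l0) //.
- rewrite lee_pmul2l ?lte_fin //; apply: ge0_le_integralT => x.
    by rewrite lee_fin mulr_ge0 ?invr_ge0 ?(ltW l0).
  rewrite -(@lee_pmul2l _ l%:E) ?lte_fin // -lhK.
  exact: le_trans (hg x) (gf x).
- by move=> x _; rewrite lee_fin mulr_ge0 ?invr_ge0 ?(ltW l0).
- by apply/measurable_EFinP; apply: measurable_funM => //; exact: measurable_funP.
Qed.

End NonnegIntegral.

Section IteratedIntegral.
Context {R : realType}.
Local Open Scope ereal_scope.
Local Notation mu := (@lebesgue_measure R).

Lemma iint_ge0 k (g : 'rV[R]_k -> \bar R) : (forall x, 0 <= g x) -> 0 <= iint g.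
Proof. by elim: k g => [|k IH] g g0 //=; apply: integral_ge0 => t _; exact: IH. Qed.

Lemma iint_le k (g1 g2 : 'rV[R]_k -> \bar R) : (forall x, 0 <= g1 x) ->
  (forall x, g1 x <= g2 x) -> iint g1 <= iint g2.
Proof.
elim: k g1 g2 => [|k IH] g1 g2 g10 g12 //=.
by apply: ge0_le_integralT => t; [exact: iint_ge0 | exact: IH].
Qed.

Lemma iint_le_scale k (g f : 'rV[R]_k -> \bar R) (l : R) : (0 < l)%R ->
  (forall x, 0 <= g x) -> (forall x, g x <= l%:E * f x) -> iint g <= l%:E * iint f.
Proof.
elim: k g f => [|k IH] g f l0 g0 gf //=.
by apply: ge0_le_integralTZl => // t; [exact: iint_ge0 | exact: IH].
Qed.

Definition box k (a b : R) : set 'rV[R]_k := [set x | forall i, (a <= x 0 i <= b)%R].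

Lemma box_consv k (a b t : R) (y : 'rV[R]_k) :
  box a b (consv t y) <-> (a <= t <= b)%R /\ box a b y.
Proof.
rewrite /consv; split => [yb|[tab yb] i].
  split=> [|j]; first by have := yb ord0; rewrite mxE unlift_none.
  by have := yb (lift ord0 j); rewrite mxE liftK.
by rewrite mxE; case: unliftP => [j _|_]; [exact: yb | exact: tab].
Qed.

Lemma indic_box_consv k (a b t : R) (y : 'rV[R]_k) :
  (\1_(box a b) (consv t y) : R) = (\1_`[a, b] t * \1_(box a b) y)%R.
Proof.
rewrite !indicE; have [/set_mem/=|tab] := boolP (t \in `[a, b]%classic).
  rewrite in_itv /= => tab; rewrite mul1r.
  suff -> : (consv t y \in box a b) = (y \in box a b) by [].
  apply/idP/idP => /set_mem; first by case/box_consv => _ /mem_set.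
  by move=> yb; apply/mem_set/box_consv.
rewrite mul0r; case: (boolP (_ \in _)) => // /set_mem /box_consv [tab' _].
by case/negP: tab; apply/mem_set; rewrite /= in_itv /= tab'.
Qed.

Lemma integral_indic_itv (a b c : R) : (a <= b)%R -> (0 <= c)%R ->
  \int[mu]_(t in setT) (c * \1_`[a, b] t)%:E = (c * (b - a))%:E.
Proof.
move=> ab c0; under eq_integral do rewrite EFinM.
rewrite ge0_integralZl_EFin //; last by apply/measurable_EFinP; exact: measurable_indic.
rewrite integral_indic //= setIT lebesgue_measure_itv /= lte_fin.
case: ifPn => [_|]; first by rewrite -EFinD -EFinM.
rewrite -leNgt => ba; have -> : b = a by apply/eqP; rewrite eq_le ba ab.
by rewrite subrr mulr0 mule0.
Qed.

Lemma iint_indic_box k (a b c : R) : (a <= b)%R -> (0 <= c)%R ->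
  iint (fun x : 'rV[R]_k => (c * \1_(box a b) x)%:E) = (c * (b - a) ^+ k)%:E.
Proof.
move=> ab; elim: k c => [|k IH] c c0 /=.
  by rewrite indicE mem_set // => -[].
have inner t : iint (fun y : 'rV[R]_k => (c * \1_(box a b) (consv t y))%:E) =
               (c * \1_`[a, b] t * (b - a) ^+ k)%:E.
  under eq_fun do rewrite indic_box_consv mulrA.
  by apply: IH; rewrite mulr_ge0.
under eq_integral do rewrite inner mulrAC.
by rewrite integral_indic_itv ?mulr_ge0 ?exprn_ge0 ?subr_ge0 // exprSr mulrA.
Qed.

End IteratedIntegral.

Section SphereIntegral.
Context {R : realType}.
Local Open Scope ereal_scope.

Definition cone_ext k (F : 'rV[R]_k -> \bar R) (x : 'rV[R]_k) : \bar R :=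
  if ((0 < normv x) && (normv x <= 1))%R then F ((normv x)^-1 *: x) else 0.

Lemma sphere_intE k (F : 'rV[R]_k -> \bar R) : sphere_int F = (k%:R)%:E * iint (cone_ext F).
Proof. by []. Qed.

Lemma cone_ext_ge0 k (F : 'rV[R]_k -> \bar R) :
  (forall u, sphere k u -> 0 <= F u) -> forall x, 0 <= cone_ext F x.
Proof.
by move=> F0 x; rewrite /cone_ext; case: ifPn => // /andP[+ _];
  rewrite normv_gt0 => /sphere_normalize /F0.
Qed.

Lemma iint_cone_ext_le k (F : 'rV[R]_k -> \bar R) (M : R) : (0 <= M)%R ->
  (forall u, sphere k u -> 0 <= F u <= M%:E) -> iint (cone_ext F) <= (M * 2 ^+ k)%:E.
Proof.
move=> M0 FM.
apply: le_trans (_ : _ <= iint (fun x => (M * \1_(box (-1) 1) x)%:E)) _; last first.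
  by rewrite iint_indic_box // ?opprK //; lra.
apply: iint_le => [|x]; first by apply: cone_ext_ge0 => u /FM /andP[].
rewrite /cone_ext; case: ifPn => [/andP[+ nx1]|_]; last by rewrite lee_fin mulr_ge0.
rewrite normv_gt0 => /sphere_normalize /FM /andP[_ FxM].
rewrite indicE mem_set ?mulr1 // => i; rewrite -ler_norml.
by apply: coord_le1; rewrite -normv_le1.
Qed.

Lemma iint_cone_ext_ge k (F : 'rV[R]_k.+1 -> \bar R) (m : R) : (0 <= m)%R ->
  (forall u, sphere k.+1 u -> m%:E <= F u) ->
  (m * (k.+1%:R^-1 / 2) ^+ k.+1)%:E <= iint (cone_ext F).
Proof.
move=> m0 Fm; set b := (k.+1%:R^-1)%R.
have b0 : (0 < b)%R by rewrite invr_gt0.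
apply: le_trans (_ : _ <= iint (fun x => (m * \1_(box (b / 2) b) x)%:E)) _.
  by rewrite iint_indic_box //; [have -> : (b - b / 2 = b / 2)%R by lra | lra].
apply: iint_le => [x|x]; first by rewrite lee_fin mulr_ge0.
rewrite indicE; case: (boolP (_ \in _)) => [/set_mem xb|_]; last first.
  by rewrite mulr0; apply: cone_ext_ge0 => u /Fm; apply: le_trans; rewrite lee_fin.
have x0 : x != 0%R.
  apply: contraTneq (xb ord0) => ->; rewrite mxE; lra.
have x1 : (dotv x x <= 1)%R.
  apply: le_trans (_ : _ <= \sum_(i < k.+1) b ^+ 2)%R _.
    apply: ler_sum => i _; rewrite -expr2 ler_sqr ?nnegrE; have := xb i; lra.
  by rewrite sumr_const card_ord -mulr_natl expr2 mulrA mulfV // mul1r invf_le1 ?ler1n.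
by rewrite /cone_ext normv_gt0 x0 normv_le1 x1 mulr1; apply/Fm/sphere_normalize.
Qed.

Lemma sphere_int_lt k (F G : 'rV[R]_k.+1 -> \bar R) (l m M : R) :
  (0 < l < 1)%R -> (0 < m)%R ->
  (forall u, sphere k.+1 u -> 0 <= F u <= l%:E * G u) ->
  (forall u, sphere k.+1 u -> m%:E <= G u <= M%:E) ->
  sphere_int F < sphere_int G.
Proof.
move=> /andP[l0 l1] m0 FG Gm.
have G0 u : sphere k.+1 u -> 0 <= G u.
  by move=> /Gm /andP[mG _]; apply: le_trans mG; rewrite lee_fin ltW.
have Xlo := iint_cone_ext_ge (ltW m0) (fun u su => (andP (Gm u su)).1).
have Xup : iint (cone_ext G) <= (`|M| * 2 ^+ k.+1)%:E.
  apply: iint_cone_ext_le => // u su; rewrite G0 //=.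
  by have /andP[_ /le_trans] := Gm u su; apply; rewrite lee_fin ler_norm.
have Xpos : 0 < iint (cone_ext G).
  by apply: lt_le_trans Xlo; rewrite lte_fin mulr_gt0 // exprn_gt0 // divr_gt0.
have Y : iint (cone_ext F) <= l%:E * iint (cone_ext G).
  apply: iint_le_scale => // [|x]; first by apply: cone_ext_ge0 => u /FG /andP[].
  rewrite /cone_ext; case: ifPn => [/andP[+ _]|_]; last by rewrite mule0.
  by rewrite normv_gt0 => /sphere_normalize /FG /andP[].
rewrite !sphere_intE; move: Xpos Xup Y; case: (iint (cone_ext G)) => // x.
rewrite lte_fin => x0 _ Y; apply: le_lt_trans (lee_wpmul2l _ Y) _; first by rewrite lee_fin.
by rewrite -!EFinM lte_fin ltr_pM2l // gtr_pMl.
Qed.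

End SphereIntegral.

Section NegativePower.
Context {R : realType}.

Lemma ler_powR_neg (a h p : R) : p < 0 -> 0 < a <= h -> h `^ p <= a `^ p.
Proof.
move=> p0 /andP[a0 ah]; have h0 := lt_le_trans a0 ah.
by rewrite /powR !gt_eqF // ler_expR ler_nM2l // ler_ln.
Qed.

Lemma powR_lt1_neg (a p : R) : p < 0 -> 1 < a -> a `^ p < 1.
Proof.
move=> p0 a1; rewrite /powR gt_eqF ?(lt_trans ltr01) //.
by rewrite expR_lt1 nmulr_rlt0 // ln_gt0.
Qed.

End NegativePower.

Section SupportFunction.
Context {R : realType} {k : nat}.

Lemma support_fun_ge (K : set 'rV[R]_k) z y : compact K -> K y -> dotv z y <= support_fun K z.
Proof.
move=> cK Ky; apply: sup_upper_bound; last by exists y.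
apply: compact_has_sup; first by exists (dotv z y), y.
apply: continuous_compact cK; apply: continuous_subspaceT.
by apply: dotv_continuous => i; [exact: cst_continuous | exact: coord_continuous].
Qed.

Lemma Kp_not_support_ge (S : set 'M[R]_k.+1) p (f : 'rV[R]_k.+1 -> R) c1 c2 K a :
  p < 0 -> 1 < a -> 0 < c1 ->
  (forall x, sphere k.+1 x -> 0 < f x /\ c1 <= f x <= c2) ->
  Kp S p f K -> ~ (forall z, sphere k.+1 z -> a <= support_fun K z).
Proof.
move=> p0 a1 c10 fb [_ Kint] Ka.
have a0 : 0 < a by apply: lt_trans a1.
suff : (sphere_int (fun x => (f x)%:E * powE (support_fun K x) p) <
        sphere_int (fun x => (f x)%:E))%E by rewrite Kint ltxx.
apply: (@sphere_int_lt _ _ _ _ (a `^ p) c1 c2) => // [|u su|u su].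
- by rewrite powR_gt0 // powR_lt1_neg.
- have [f0 _] := fb u su; have hu := Ka u su.
  rewrite /powE gt_eqF ?(lt_le_trans a0) // -EFinM !lee_fin mulr_ge0 ?powR_ge0 ?(ltW f0) //=.
  by rewrite mulrC ler_wpM2r ?(ltW f0) // ler_powR_neg // a0.
- by have [_ /andP[h1 h2]] := fb u su; rewrite !lee_fin h1 h2.
Qed.

Lemma K0_support_fun_ge (S : set 'M[R]_k) K (b : 'rV[R]_k) (s c : R) :
  K0 S K -> K (s *: b) -> 0 <= s ->
  (forall z, sphere k z -> exists2 phi, S phi & c <= dotv z (act phi b)) ->
  forall z, sphere k z -> s * c <= support_fun K z.
Proof.
move=> [[cK _ _] _ Kinv] Ksb s0 hb z /hb[phi Sphi cphi].
have Kphi : K (act phi (s *: b)) by rewrite -(Kinv phi Sphi); exists (s *: b).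
apply: le_trans (support_fun_ge z cK Kphi).
by rewrite actZ dotvZr ler_wpM2l.
Qed.

End SupportFunction.

Theorem lemma3p2 (R : realType) (n : nat) (S : set 'M[R]_n.+1) :
  (1 <= n)%N -> subgroup_O S -> discrete_set S -> spanning_property S ->
  exists C : R, 0 < C /\
    forall (p : R) (f : 'rV[R]_n.+1 -> R) (c1 c2 : R),
      p < 0 -> 0 < c1 ->
      sphere_borel f ->
      (forall x, sphere n.+1 x -> 0 < f x /\ c1 <= f x <= c2) ->
      (forall phi x, S phi -> sphere n.+1 x -> f (act phi x) = f x) ->
      forall K : set 'rV[R]_n.+1, Kp S p f K ->
        forall x, sphere n.+1 x -> support_fun K x <= C.
Proof.
move=> _ hS _ hsp; have [c c0 hc] := orbit_dotv_uniform hS hsp.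
exists (2 / c); split=> [|p f c1 c2 p0 c10 _ fb _ K hK x sx]; first exact: divr_gt0.
have [hK0 _] := hK; have [_ K_0 _] := hK0.
have Kx0 : [set dotv x y | y in K] !=set0 by exists (dotv x 0), 0.
rewrite leNgt; apply/negP => /(sup_gt Kx0)[_ [y Ky <-] xy].
have y0 : y != 0 by apply: contraTneq xy => ->; rewrite dotvC dotv0l -leNgt ltW ?divr_gt0.
have sy := sphere_normalize y0.
have ys : 2 / c < normv y.
  apply: lt_le_trans xy _; rewrite -{1}(normvZV y0) dotvZr.
  by rewrite ler_piMr ?(dotv_sphere_le1 sx sy) // ltW ?normv_gt0.
have hKy : forall z, sphere n.+1 z -> normv y * c <= support_fun K z.
  by apply: K0_support_fun_ge hK0 _ _ (hc _ ^~ sy); rewrite ?normvZV // ltW ?normv_gt0.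
have lt12 : 1 < 2 :> R by lra.
apply: (Kp_not_support_ge p0 lt12 c10 fb hK) => z /hKy; apply: le_trans.
by rewrite -ler_pdivrMr // ltW.
Qed.
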